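(* Let $R$ be a ring satisfying condition (C): every subring of $Q_{\max}^r(R)$ containing $R$ is flat as a left $R$-module. Then for every successor ordinal $\alpha$, the Gabriel filter $\mathcal{E}_\alpha$ (defined in the context) has a basis consisting of finitely generated right ideals, i.e. for every $I\in\mathcal{E}_\alpha$ there is a finitely generated right ideal $J\in\mathcal{E}_\alpha$ with $J\subseteq I$.
   Context: Rings are associative with unit; modules are right modules. For a Gabriel filter $\mathcal{E}$ of right ideals of $R$ (equivalently a hereditary torsion theory whose torsion modules $M$ are those with $\{r: mr=0\}\in\mathcal{E}$ for all $m\in M$), $R_{\mathcal{E}}=\varinjlim_{I\in\mathcal{E}}\mathrm{Hom}_R(I,R/\mathcal{T}R)$ is its right ring of quotients. The rings $Q_\alpha\subseteq Q_{\max}^r(R)$ and filters $\mathcal{E}_\alpha$ are defined by transfinite induction: $\mathcal{E}_0$ is the set of dense right ideals and $Q_0=Q_{\max}^r(R)$; $\mathcal{E}_{\alpha+1}=\{I \text{ right ideal of } R: IQ_\alpha=Q_\alpha\}$ (the Gabriel filter of the torsion theory whose torsion modules are the $M$ with $M\otimes_R Q_\alpha=0$) and $Q_{\alpha+1}=R_{\mathcal{E}_{\alpha+1}}$; for limit $\alpha$, $\mathcal{E}_\alpha=\bigcap_{\beta<\alpha}\mathcal{E}_\beta$ and $Q_\alpha=R_{\mathcal{E}_\alpha}$. *)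

From HB Require Import structures.
From mathcomp Require Import all_boot all_order all_algebra.
Set Implicit Arguments. Unset Strict Implicit. Unset Printing Implicit Defensive.
Import GRing.Theory.
Local Open Scope ring_scope.

Section RingTheory.
Variables (R : pzRingType).

Definition right_ideal (I : R -> Prop) : Prop :=
  [/\ I 0, (forall x y, I x -> I y -> I (x + y)) & (forall x r, I x -> I (x * r))].

Definition fg_right_ideal (I : R -> Prop) : Prop :=
  right_ideal I /\
  exists (n : nat) (g : 'I_n -> R),
    forall x, I x <-> exists c : 'I_n -> R, x = \sum_(k < n) g k * c k.

Definition dense_right_ideal (I : R -> Prop) : Prop :=
  right_ideal I /\
  forall x y : R, y != 0 -> exists r, I (x * r) /\ y * r != 0.

Variables (Q : pzRingType) (phi : {rmorphism R -> Q}).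

(* (Q, phi) is the maximal right ring of quotients of R:
   phi is injective, Q_R is a rational extension of R_R (Q is a right ring of
   quotients of R), and every R-homomorphism from a dense right ideal to R is
   left multiplication by an element of Q (so Q = lim_{I dense} Hom_R(I,R)). *)
Definition is_Qmax : Prop :=
  [/\ injective phi,
      (forall p q : Q, q != 0 ->
          exists r : R, (exists s : R, p * phi r = phi s) /\ q * phi r != 0)
    & (forall (I : R -> Prop) (f : R -> R), dense_right_ideal I ->
          (forall x y, I x -> I y -> f (x + y) = f x + f y) ->
          (forall x r, I x -> f (x * r) = f x * r) ->
          exists q : Q, forall x, I x -> phi (f x) = q * phi x)].

Definition subring_over (S : Q -> Prop) : Prop :=
  [/\ S 1, (forall x y, S x -> S y -> S (x - y)),
      (forall x y, S x -> S y -> S (x * y)) & (forall r, S (phi r))].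

(* Tensor products A (x)_R S, for A a right R-module (= left R^c-module) and
   S a subset of Q closed under the left R-action r.m = phi r * m.  Elements
   of A (x)_R S are represented by finite lists of pairs (a, m) (formal sums
   of simple tensors a (x) m); [tens_rel] is the congruence generated by the
   defining relations of the tensor product. *)
Section Tensor.
Variables (A : lmodType R^c) (S : Q -> Prop).

Definition allS (s : seq (A * Q)) : Prop := forall p, p \in s -> S p.2.

Inductive tens_rel : seq (A * Q) -> seq (A * Q) -> Prop :=
| tens_refl s : allS s -> tens_rel s s
| tens_sym s t : tens_rel s t -> tens_rel t s
| tens_trans s t u : tens_rel s t -> tens_rel t u -> tens_rel s u
| tens_perm s t : allS s -> perm_eq s t -> tens_rel s t
| tens_cat s s' t : tens_rel s s' -> allS t -> tens_rel (s ++ t) (s' ++ t)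
| tens_addl (a a' : A) m : S m -> tens_rel [:: (a + a', m)] [:: (a, m); (a', m)]
| tens_addr (a : A) m m' : S m -> S m' ->
    tens_rel [:: (a, m + m')] [:: (a, m); (a, m')]
| tens_bal (a : A) (r : R) m : S m ->
    tens_rel [:: ((r : R^c) *: a, m)] [:: (a, phi r * m)]
| tens_zero m : S m -> tens_rel [:: (0, m)] [::].

End Tensor.

Definition flat_left (S : Q -> Prop) : Prop :=
  forall (A B : lmodType R^c) (f : {linear A -> B}), injective f ->
  forall s : seq (A * Q), allS S s ->
    tens_rel S [seq (f p.1, p.2) | p <- s] [::] -> tens_rel S s [::].

Definition condC : Prop :=
  forall S : Q -> Prop, subring_over S -> flat_left S.

Definition ideal_ext_full (I : R -> Prop) (S : Q -> Prop) : Prop :=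
  forall q : Q, S q <->
    exists (n : nat) (i : 'I_n -> R) (t : 'I_n -> Q),
      [/\ forall k, I (i k), forall k, S (t k) & q = \sum_(k < n) phi (i k) * t k].

(* R_E, viewed inside Q = Q_max: the q with q I contained in R for some I in E *)
Definition ring_of_quot (E : (R -> Prop) -> Prop) (q : Q) : Prop :=
  exists I, E I /\ forall x, I x -> exists s : R, q * phi x = phi s.

End RingTheory.

Definition well_order (W : Type) (lt : W -> W -> Prop) : Prop :=
  [/\ well_founded lt, (forall x y z, lt x y -> lt y z -> lt x z)
    & (forall x y, [\/ lt x y, x = y | lt y x])].

Definition is_least (W : Type) (lt : W -> W -> Prop) (w : W) : Prop :=
  forall v, ~ lt v w.

Definition is_succ_of (W : Type) (lt : W -> W -> Prop) (w v : W) : Prop :=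
  lt v w /\ forall u, ~ (lt v u /\ lt u w).

Definition is_limit (W : Type) (lt : W -> W -> Prop) (w : W) : Prop :=
  ~ is_least lt w /\ forall v, ~ is_succ_of lt w v.

(* If I Q_v = Q_v, then 1 = i_1 t_1 + ... + i_n t_n with i_k in I and t_k in Q_v,
   and the right ideal J generated by the i_k already satisfies J Q_v = Q_v
   because Q_v is a ring; so everything rests on each Q_alpha being a subring
   of Q_max. By transfinite induction this reduces to each E_alpha being a
   Gabriel filter: dense ideals and intersections of Gabriel filters are
   elementary, and for E_(alpha+1) the closure under (I : r) = {x | r x in I}
   comes from flatness of Q_alpha: the injection R/(I : r) -> R/I, x |-> r x,
   stays injective after tensoring with Q_alpha, and (R/I) (x) Q_alpha is
   Q_alpha / I Q_alpha = 0. *)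

From HB Require Import structures.
From mathcomp Require Import all_boot all_order all_algebra.
From mathcomp Require Import boolp.
Set Implicit Arguments. Unset Strict Implicit. Unset Printing Implicit Defensive.
Import GRing.Theory.
Local Open Scope ring_scope.
Local Open Scope quotient_scope.

Section RightIdeals.
Variables (R : pzRingType) (I : R -> Prop).
Hypothesis rI : right_ideal I.

Lemma rideal0 : I 0. Proof. by case: rI. Qed.
Lemma ridealD x y : I x -> I y -> I (x + y). Proof. by case: rI => _ + _; apply. Qed.
Lemma ridealMr x r : I x -> I (x * r). Proof. by case: rI => _ _; apply. Qed.
Lemma ridealN x : I x -> I (- x).
Proof. by move=> Ix; rewrite -mulrN1; apply: ridealMr. Qed.
Lemma ridealB x y : I x -> I y -> I (x - y).
Proof. by move=> Ix Iy; apply: ridealD => //; apply: ridealN. Qed.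

Lemma rideal_sum n (F : 'I_n -> R) : (forall k, I (F k)) -> I (\sum_(k < n) F k).
Proof. by move=> IF; apply: (big_ind I) => //; [apply: rideal0 | apply: ridealD]. Qed.

End RightIdeals.

Definition colon (R : pzRingType) (I : R -> Prop) (r : R) : R -> Prop :=
  fun x => I (r * x).

Lemma colon_right_ideal (R : pzRingType) (I : R -> Prop) :
  right_ideal I -> forall r, right_ideal (colon I r).
Proof.
move=> rI r; split; rewrite /colon.
- by rewrite mulr0; apply: rideal0.
- by move=> x y Ix Iy; rewrite mulrDr; apply: ridealD.
- by move=> x t Ix; rewrite mulrA; apply: ridealMr.
Qed.

Lemma right_idealI (R : pzRingType) (I J : R -> Prop) :
  right_ideal I -> right_ideal J -> right_ideal (fun x => I x /\ J x).
Proof.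
move=> rI rJ; split=> [|x y [Ix Jx] [Iy Jy]|x r [Ix Jx]].
- by split; apply: rideal0.
- by split; apply: ridealD.
- by split; apply: ridealMr.
Qed.

Section SpanIdeal.
Variables (R : pzRingType) (n : nat) (g : 'I_n -> R).

Definition span_ideal : R -> Prop :=
  fun x => exists c : 'I_n -> R, x = \sum_(k < n) g k * c k.

Lemma span_ideal_fg : fg_right_ideal span_ideal.
Proof.
split; last by exists n, g.
split.
- by exists (fun=> 0); rewrite big1 // => k _; rewrite mulr0.
- move=> _ _ [c ->] [d ->]; exists (fun k => c k + d k).
  by rewrite -big_split; apply: eq_bigr => k _; rewrite mulrDr.
- move=> _ r [c ->]; exists (fun k => c k * r).
  by rewrite mulr_suml; apply: eq_bigr => k _; rewrite mulrA.
Qed.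

Lemma span_ideal_gen k : span_ideal (g k).
Proof.
exists (fun l => (l == k)%:R); rewrite (bigD1 k) //= eqxx mulr1 big1 ?addr0 //.
by move=> l /negbTE ->; rewrite mulr0.
Qed.

Lemma span_ideal_sub (I : R -> Prop) : right_ideal I ->
  (forall k, I (g k)) -> forall x, span_ideal x -> I x.
Proof.
by move=> rI Ig _ [c ->]; apply: rideal_sum => // k; apply: ridealMr.
Qed.

End SpanIdeal.

Section QuotientModule.
Variables (R : pzRingType) (I : R -> Prop) (rI : right_ideal I).

(* The proof argument is unused: it lets instance inference recover the
   zmodClosed structure, hence the quotient R/I, from the predicate alone. *)
Definition ideal_pred of right_ideal I : {pred R} := fun x => `[< I x >].

Lemma ideal_pred_zmod_closed : zmod_closed (ideal_pred rI).
Proof.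
split=> [|x y]; rewrite !unfold_in /ideal_pred /=.
  exact/asboolP/(rideal0 rI).
by move=> /asboolP Ix /asboolP Iy; apply/asboolP; apply: ridealB.
Qed.

HB.instance Definition _ := GRing.isZmodClosed.Build R (ideal_pred rI)
  ideal_pred_zmod_closed.

Local Notation RmodI := {ideal_quot ideal_pred rI}.

Lemma quot_eqP x y : \pi_RmodI x = \pi y <-> I (x - y).
Proof. by rewrite (rwP eqP) -Quotient.idealrBE; split => /asboolP. Qed.

Lemma quot_eq0P x : \pi_RmodI x = 0 <-> I x.
Proof. by rewrite -[0](raddf0 \pi_RmodI) quot_eqP subr0. Qed.

Definition quot_scale (r : R^c) : RmodI -> RmodI :=
  lift_op1 RmodI (fun x : R => x * (r : R)).

Lemma pi_quot_scale r x : \pi_RmodI (x * r) = quot_scale r (\pi x).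
Proof.
rewrite /quot_scale -lock; apply/quot_eqP; rewrite -mulrBl; apply: (ridealMr rI).
by apply/quot_eqP; rewrite reprK.
Qed.

Lemma quot_scaleA a b v : quot_scale a (quot_scale b v) = quot_scale (a * b) v.
Proof. by elim/quotW: v => x; rewrite -!pi_quot_scale mulrA. Qed.
Lemma quot_scale1 : left_id 1 quot_scale.
Proof. by elim/quotW => x; rewrite -pi_quot_scale mulr1. Qed.
Lemma quot_scaleDr : right_distributive quot_scale +%R.
Proof.
move=> r; elim/quotW => x; elim/quotW => y.
by rewrite -raddfD -!pi_quot_scale -raddfD mulrDl.
Qed.
Lemma quot_scaleDl v : {morph quot_scale^~ v : a b / a + b}.
Proof. by elim/quotW: v => x a b; rewrite -!pi_quot_scale -raddfD mulrDr. Qed.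

HB.instance Definition _ := GRing.Zmodule_isLmodule.Build R^c RmodI
  quot_scaleA quot_scale1 quot_scaleDr quot_scaleDl.

Lemma pi_scaleE (r x : R) : \pi_RmodI (x * r) = (r : R^c) *: \pi_RmodI x.
Proof. exact: pi_quot_scale. Qed.

Lemma repr0 : I (repr (0 : RmodI)).
Proof. by rewrite -[repr _]subr0; apply/quot_eqP; rewrite reprK raddf0. Qed.

Lemma reprD (a b : RmodI) : I (repr (a + b) - (repr a + repr b)).
Proof. by apply/quot_eqP; rewrite reprK -{1}[a]reprK -{1}[b]reprK -raddfD. Qed.

Lemma reprZ (r : R) (a : RmodI) : I (repr ((r : R^c) *: a) - repr a * r).
Proof. by apply/quot_eqP; rewrite reprK pi_scaleE reprK. Qed.

End QuotientModule.

Section IdealExtension.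
Variables (R Q : pzRingType) (phi : {rmorphism R -> Q}) (S : Q -> Prop).
Hypothesis HS : subring_over phi S.

Lemma subring1 : S 1. Proof. by case: HS. Qed.
Lemma subringB x y : S x -> S y -> S (x - y). Proof. by case: HS => _ + _ _; apply. Qed.
Lemma subringM x y : S x -> S y -> S (x * y). Proof. by case: HS => _ _ + _; apply. Qed.
Lemma subring_phi r : S (phi r). Proof. by case: HS. Qed.
Lemma subring0 : S 0.
Proof. by rewrite -(subrr 1); apply: subringB; apply: subring1. Qed.
Lemma subringN x : S x -> S (- x).
Proof. by move=> Sx; rewrite -sub0r; apply: subringB => //; apply: subring0. Qed.
Lemma subringD x y : S x -> S y -> S (x + y).
Proof. by move=> Sx Sy; rewrite -[y]opprK; apply: subringB => //; apply: subringN. Qed.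

Inductive ext_ideal (I : R -> Prop) : Q -> Prop :=
| ext_ideal0 : ext_ideal I 0
| ext_idealD a b : ext_ideal I a -> ext_ideal I b -> ext_ideal I (a + b)
| ext_idealM i t : I i -> S t -> ext_ideal I (phi i * t).

Variable I : R -> Prop.

Lemma ext_idealN a : ext_ideal I a -> ext_ideal I (- a).
Proof.
elim=> [|a' b _ ha _ hb|i t Ii St].
- by rewrite oppr0; apply: ext_ideal0.
- by rewrite opprD; apply: ext_idealD.
- by rewrite -mulrN; apply: ext_idealM => //; apply: subringN.
Qed.

Lemma ext_idealB a b : ext_ideal I a -> ext_ideal I b -> ext_ideal I (a - b).
Proof. by move=> Ia Ib; apply: ext_idealD => //; apply: ext_idealN. Qed.

Lemma ext_ideal_sub a : ext_ideal I a -> S a.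
Proof.
elim=> [|*|i t _ St]; [exact: subring0 | exact: subringD |].
by apply: subringM => //; apply: subring_phi.
Qed.

Lemma ext_idealMr a q : ext_ideal I a -> S q -> ext_ideal I (a * q).
Proof.
move=> Ia Sq; elim: Ia => [|a1 b1 _ h1 _ h2|i t Ii St].
- by rewrite mul0r; apply: ext_ideal0.
- by rewrite mulrDl; apply: ext_idealD.
- by rewrite -mulrA; apply: ext_idealM => //; apply: subringM.
Qed.

Lemma ext_ideal_sumP q : ext_ideal I q <->
  exists (n : nat) (i : 'I_n -> R) (t : 'I_n -> Q),
    [/\ forall k, I (i k), forall k, S (t k) & q = \sum_(k < n) phi (i k) * t k].
Proof.
split=> [|[n [i [t [Ii St ->]]]]]; last first.
  apply: (big_ind (ext_ideal I)); [exact: ext_ideal0 | exact: ext_idealD |].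
  by move=> k _; apply: ext_idealM.
elim=> [|_ _ _ [n1 [i1 [t1 [Ii1 St1 ->]]]] _ [n2 [i2 [t2 [Ii2 St2 ->]]]]|i t Ii St].
- by exists 0%N, (fun=> 0), (fun=> 0); split=> [[]|[]|]; rewrite ?big_ord0.
- pose cat_fun T (f1 : 'I_n1 -> T) (f2 : 'I_n2 -> T) (k : 'I_(n1 + n2)) :=
    match split k with inl k => f1 k | inr k => f2 k end.
  exists (n1 + n2)%N, (cat_fun _ i1 i2), (cat_fun _ t1 t2).
  split=> [k|k|]; rewrite /cat_fun; [by case: split.. |].
  rewrite big_split_ord; congr (_ + _); apply: eq_bigr => k _.
    by rewrite -[lshift _ _]/(unsplit (inl k)) unsplitK.
  by rewrite -[rshift _ _]/(unsplit (inr k)) unsplitK.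
- by exists 1%N, (fun=> i), (fun=> t); split=> //; rewrite big_ord1.
Qed.

Lemma ideal_ext_fullE : ideal_ext_full phi I S <-> ext_ideal I 1.
Proof.
split=> [full | I1 q]; first by apply/ext_ideal_sumP/full; apply: subring1.
split=> [Sq | /ext_ideal_sumP/ext_ideal_sub //].
by apply/ext_ideal_sumP; rewrite -(mul1r q); apply: ext_idealMr.
Qed.

Lemma ext_ideal_colon j a : ext_ideal (colon I j) a -> ext_ideal I (phi j * a).
Proof.
elim=> [|*|y u Iy Su]; first by rewrite mulr0; apply: ext_ideal0.
  by rewrite mulrDr; apply: ext_idealD.
by rewrite mulrA -rmorphM; apply: ext_idealM.
Qed.

End IdealExtension.

Lemma fg_ext_full (R Q : pzRingType) (phi : {rmorphism R -> Q}) (S : Q -> Prop)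
    (I : R -> Prop) :
  subring_over phi S -> right_ideal I -> ideal_ext_full phi I S ->
  exists J, [/\ fg_right_ideal J, ideal_ext_full phi J S & forall x, J x -> I x].
Proof.
move=> HS rI /(ideal_ext_fullE HS)/ext_ideal_sumP[n [i [t [Ii St one_eq]]]].
exists (span_ideal i); split; first exact: span_ideal_fg.
  apply/(ideal_ext_fullE HS)/ext_ideal_sumP; exists n, i, t; split=> // k.
  exact: span_ideal_gen.
exact: span_ideal_sub.
Qed.

Lemma allS_seq1 (R Q : pzRingType) (S : Q -> Prop) (A : lmodType R^c) (a : A) m :
  S m -> allS S [:: (a, m)].
Proof. by move=> Sm p; rewrite inE => /eqP ->. Qed.

Section TensorQuotient.
Variables (R Q : pzRingType) (phi : {rmorphism R -> Q}) (S : Q -> Prop).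
Hypothesis HS : subring_over phi S.
Variables (I : R -> Prop) (rI : right_ideal I).
Local Notation RmodI := {ideal_quot ideal_pred rI}.

(* The map (R/I) (x) S -> S/IS, a (x) m |-> a m, on formal sums of tensors. *)
Definition tensor_eval (s : seq (RmodI * Q)) : Q := \sum_(p <- s) phi (repr p.1) * p.2.

Lemma tensor_eval0 : tensor_eval [::] = 0.
Proof. exact: big_nil. Qed.

Lemma tensor_eval1 a m : tensor_eval [:: (a, m)] = phi (repr a) * m.
Proof. exact: big_seq1. Qed.

Lemma tensor_eval_cat s t : tensor_eval (s ++ t) = tensor_eval s + tensor_eval t.
Proof. exact: big_cat. Qed.

Lemma tensor_eval2 a m b m' :
  tensor_eval [:: (a, m); (b, m')] = phi (repr a) * m + phi (repr b) * m'.
Proof. by rewrite (tensor_eval_cat [:: _]) !tensor_eval1. Qed.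

Lemma tens_rel_eval s t :
  tens_rel phi S s t -> ext_ideal phi S I (tensor_eval s - tensor_eval t).
Proof.
elim=> {s t}.
- by move=> s _; rewrite subrr; apply: ext_ideal0.
- by move=> s t _ h; rewrite -opprB; apply: ext_idealN.
- by move=> s t u _ h1 _ h2; rewrite -(subrKA (tensor_eval t)); apply: ext_idealD.
- by move=> s t _ pst; rewrite /tensor_eval (perm_big _ pst) subrr; apply: ext_ideal0.
- by move=> s s' t _ h _; rewrite !tensor_eval_cat opprD addrACA subrr addr0.
- move=> a a' m Sm; rewrite tensor_eval1 tensor_eval2 -mulrDl -mulrBl.
  by rewrite -!rmorphD -rmorphB; apply: ext_idealM Sm; apply: reprD.
- move=> a m m' Sm Sm'; rewrite tensor_eval1 tensor_eval2 mulrDr subrr.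
  exact: ext_ideal0.
- move=> a r m Sm; rewrite tensor_eval1 tensor_eval1 mulrA -rmorphM -mulrBl.
  by rewrite -rmorphB; apply: ext_idealM Sm; apply: reprZ.
- move=> m Sm; rewrite tensor_eval1 tensor_eval0 subr0.
  by apply: ext_idealM Sm; apply: repr0.
Qed.

Lemma tens_unit_vanish m :
  ext_ideal phi S I m -> tens_rel phi S [:: (\pi_RmodI 1, m)] [::].
Proof.
elim=> [|ma mb Ima IHa Imb IHb|i t Ii St].
- have := tens_bal phi (\pi_RmodI 1) 0 (subring0 HS).
  rewrite scale0r rmorph0 mul0r => h.
  exact: tens_trans (tens_sym h) (tens_zero phi _ (subring0 HS)).
- have Sb := ext_ideal_sub HS Imb.
  apply: tens_trans (tens_addr phi _ (ext_ideal_sub HS Ima) Sb) _.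
  by apply: tens_trans (tens_cat IHa _) IHb; apply: allS_seq1.
- have := tens_bal phi (\pi_RmodI 1) i St.
  have -> : (i : R^c) *: \pi_RmodI 1 = 0.
    by rewrite -pi_scaleE mul1r; apply/(quot_eq0P rI).
  by move=> h; apply: tens_trans (tens_sym h) (tens_zero phi _ St).
Qed.

Lemma tens_simple_vanish (a : RmodI) m : ext_ideal phi S I 1 -> S m ->
  tens_rel phi S [:: (a, m)] [::].
Proof.
move=> I1 Sm; have := tens_bal phi (\pi_RmodI 1) (repr a) Sm.
rewrite -pi_scaleE mul1r reprK => h; apply: tens_trans h (tens_unit_vanish _).
rewrite -(mul1r (_ * m)); apply: ext_idealMr => //.
by apply: (subringM HS) => //; apply: (subring_phi HS).
Qed.

End TensorQuotient.

Section FlatColon.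
Variables (R Q : pzRingType) (phi : {rmorphism R -> Q}) (S : Q -> Prop).
Variables (I : R -> Prop) (rI : right_ideal I) (r : R).
Local Notation RmodI := {ideal_quot ideal_pred rI}.
Local Notation RmodIr := {ideal_quot ideal_pred (colon_right_ideal rI r)}.

Definition colon_mul (a : RmodIr) : RmodI := \pi_RmodI (r * repr a).

Lemma colon_mul_linear : linear colon_mul.
Proof.
move=> c a b; rewrite /colon_mul -pi_scaleE -raddfD; apply/quot_eqP.
rewrite -mulrA -mulrDr -mulrBr; apply/(quot_eqP (colon_right_ideal rI r)).
by rewrite reprK -[a in LHS]reprK -[b in LHS]reprK -pi_scaleE -raddfD.
Qed.

HB.instance Definition _ := GRing.isLinear.Build R^c RmodIr RmodI *:%R colon_mul
  colon_mul_linear.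

Lemma colon_mul_inj : injective colon_mul.
Proof.
move=> a b /quot_eqP; rewrite -mulrBr => Ir_ab.
by rewrite -[a]reprK -[b]reprK; apply/(quot_eqP (colon_right_ideal rI r)).
Qed.

Hypotheses (HS : subring_over phi S) (flatS : flat_left phi S).

Lemma ext_ideal_colon1 : ext_ideal phi S I 1 -> ext_ideal phi S (colon I r) 1.
Proof.
move=> I1; have S1 := subring1 HS.
have vanish : tens_rel phi S [:: (colon_mul (\pi_RmodIr 1), 1)] [::].
  exact: tens_simple_vanish.
move: (flatS colon_mul_inj (allS_seq1 S1) vanish) => /(tens_rel_eval HS).
rewrite tensor_eval1 tensor_eval0 subr0 => Ir_repr1.
have -> : (1 : Q) = phi (repr (\pi_RmodIr 1)) * 1 - phi (repr (\pi_RmodIr 1) - 1) * 1.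
  by rewrite -mulrBl rmorphB opprB addrC subrK rmorph1 mulr1.
apply: (ext_idealB HS) => //; apply: ext_idealM S1.
by apply/(quot_eqP (colon_right_ideal rI r)); rewrite reprK.
Qed.

End FlatColon.

Section GabrielFilters.
Variable R : pzRingType.
Implicit Types (E : (R -> Prop) -> Prop) (I J : R -> Prop).

Definition gabriel_filter E : Prop :=
  [/\ forall I, E I -> right_ideal I,
      E (fun=> True),
      forall I r, E I -> E (colon I r)
    & forall I J, right_ideal I -> E J -> (forall x, J x -> E (colon I x)) -> E I].

Lemma gabriel_filterI E I J : gabriel_filter E -> E I -> E J ->
  E (fun x => I x /\ J x).
Proof.
move=> [rE _ E_colon E_trans] EI EJ.
apply: (E_trans _ J) => // [|x Jx]; first exact: right_idealI (rE I EI) (rE J EJ).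
suff -> : colon (fun x => I x /\ J x) x = colon I x by apply: E_colon.
by apply/predeqP => y; split=> [[]|Ixy] //; split=> //; apply: (ridealMr (rE J EJ)).
Qed.

Lemma gabriel_dense : gabriel_filter (@dense_right_ideal R).
Proof.
split.
- by move=> I [].
- by split=> [|x y y0]; [split | exists 1; rewrite mulr1].
- move=> I r [rI dI]; split=> [|x y y0]; first exact: colon_right_ideal.
  by have [t [It yt]] := dI (r * x) y y0; exists t; rewrite /colon mulrA.
- move=> I J rI [rJ dJ] dIJ; split=> // x y y0.
  have [t [Jxt yt]] := dJ x y y0.
  have [u [Iu yu]] := (dIJ _ Jxt).2 1 (y * t) yt.
  by exists (t * u); rewrite !mulrA; move: Iu; rewrite /colon mul1r.
Qed.

Lemma gabriel_bigcap (T : Type) (F : T -> (R -> Prop) -> Prop) (P : T -> Prop) :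
  (forall t, P t -> gabriel_filter (F t)) ->
  gabriel_filter (fun I => right_ideal I /\ forall t, P t -> F t I).
Proof.
move=> GF; split.
- by move=> I [].
- by split=> [|t /GF[]//]; split.
- move=> I r [rI FI]; split=> [|t Pt]; first exact: colon_right_ideal.
  by have [_ _ F_colon _] := GF t Pt; apply/F_colon/FI.
- move=> I J rI [rJ FJ] FIJ; split=> // t Pt.
  have [_ _ _ F_trans] := GF t Pt; apply: (F_trans _ J) => // [|x /FIJ[_]]; auto.
Qed.

End GabrielFilters.

Section RingOfQuotients.
Variables (R Q : pzRingType) (phi : {rmorphism R -> Q}) (E : (R -> Prop) -> Prop).
Hypotheses (phi_inj : injective phi) (GE : gabriel_filter E).
Local Notation RE := (ring_of_quot phi E).

Lemma ring_of_quotB p q : RE p -> RE q -> RE (p - q).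
Proof.
move=> [I [EI pI]] [J [EJ qJ]]; exists (fun x => I x /\ J x).
split=> [|x [/pI[s ps] /qJ[t qt]]]; first exact: gabriel_filterI.
by exists (s - t); rewrite mulrBl ps qt rmorphB.
Qed.

Lemma ring_of_quotM p q : RE p -> RE q -> RE (p * q).
Proof.
have [rE _ E_colon E_trans] := GE.
move=> [I [EI pI]] [J [EJ qJ]].
pose K x := J x /\ exists2 s, q * phi x = phi s & I s.
have rK : right_ideal K.
  have [rI rJ] := (rE I EI, rE J EJ).
  split.
  - split; first exact: rideal0.
    by exists 0; rewrite ?rmorph0 ?mulr0 //; apply: rideal0.
  - move=> x y [Jx [s qs Is]] [Jy [t qt It]]; split; first exact: ridealD.
    by exists (s + t); [rewrite !rmorphD mulrDr qs qt | apply: ridealD].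
  - move=> x r [Jx [s qs Is]]; split; first exact: ridealMr.
    by exists (s * r); [rewrite !rmorphM mulrA qs | apply: ridealMr].
have EK : E K.
  apply: (E_trans _ J) => // x Jx; have [s qs] := qJ x Jx.
  suff -> : colon K x = colon I s by apply: E_colon.
  apply/predeqP => y; rewrite /colon /K rmorphM mulrA qs -rmorphM; split.
    by move=> [_ [t /phi_inj <-]].
  by move=> Isy; split; [apply: (ridealMr (rE J EJ)) | exists (s * y)].
exists K; split=> // x [_ [s qs Is]].
by have [t pt] := pI s Is; exists t; rewrite -mulrA qs.
Qed.

Lemma gabriel_ring_of_quot : subring_over phi RE.
Proof.
have [_ ET _ _] := GE.
split; [| exact: ring_of_quotB | exact: ring_of_quotM |].
  by exists (fun=> True); split=> // x _; exists x; rewrite mul1r.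
by move=> r; exists (fun=> True); split=> // x _; exists (r * x); rewrite rmorphM.
Qed.

End RingOfQuotients.

Lemma gabriel_ext_full (R Q : pzRingType) (phi : {rmorphism R -> Q}) (S : Q -> Prop) :
  subring_over phi S -> flat_left phi S ->
  gabriel_filter (fun I => right_ideal I /\ ideal_ext_full phi I S).
Proof.
move=> HS flatS; split.
- by move=> I [].
- split; first by split.
  apply/(ideal_ext_fullE HS); rewrite -(mulr1 1) -{1}(rmorph1 phi).
  exact: ext_idealM (subring1 HS).
- move=> I r [rI /(ideal_ext_fullE HS) I1]; split; first exact: colon_right_ideal.
  exact/(ideal_ext_fullE HS)/(ext_ideal_colon1 rI r HS flatS).
- move=> I J rI [_ /(ideal_ext_fullE HS) J1] EIJ; split=> //.
  apply/(ideal_ext_fullE HS); elim: J1 => [|a b _ Ia _ Ib|j t Jj St].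
  + exact: ext_ideal0.
  + exact: ext_idealD.
  + have [_ /(ideal_ext_fullE HS) colon1] := EIJ j Jj.
    by apply: ext_ideal_colon; rewrite -[t]mul1r; apply: (ext_idealMr HS).
Qed.

Lemma least_succ_or_limit (W : Type) (lt : W -> W -> Prop) w :
  [\/ is_least lt w, exists v, is_succ_of lt w v | is_limit lt w].
Proof.
have [w_least | w_not_least] := pselect (is_least lt w); first exact: Or31.
have [w_succ | w_not_succ] := pselect (exists v, is_succ_of lt w v); first exact: Or32.
by apply: Or33; split=> // v wv; apply: w_not_succ; exists v.
Qed.

Section FilterChain.
Variables (R Q : pzRingType) (phi : {rmorphism R -> Q}).
Variables (W : Type) (lt : W -> W -> Prop).
Variables (E : W -> (R -> Prop) -> Prop) (Qa : W -> Q -> Prop).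
Hypotheses (phi_inj : injective phi) (HC : condC phi) (lt_wf : well_founded lt).
Hypothesis E_least : forall w, is_least lt w ->
  (forall I, E w I <-> dense_right_ideal I) /\ (forall q, Qa w q).
Hypothesis E_succ : forall w v, is_succ_of lt w v ->
  (forall I, E w I <-> right_ideal I /\ ideal_ext_full phi I (Qa v)) /\
  (forall q, Qa w q <-> ring_of_quot phi (E w) q).
Hypothesis E_limit : forall w, is_limit lt w ->
  (forall I, E w I <-> right_ideal I /\ (forall v, lt v w -> E v I)) /\
  (forall q, Qa w q <-> ring_of_quot phi (E w) q).

Lemma filter_chain_gabriel w : gabriel_filter (E w) /\ subring_over phi (Qa w).
Proof.
elim/(well_founded_ind lt_wf): w => w IH.
have [w_least | [v wv] | w_limit] := least_succ_or_limit lt w.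
- have [/predeqP -> Qa_all] := E_least w_least; split; first exact: gabriel_dense.
  by split=> *; apply: Qa_all.
- have [/predeqP E_wE /predeqP ->] := E_succ wv; have [_ Qa_v] := IH v wv.1.
  have GE : gabriel_filter (E w).
    by rewrite E_wE; apply: gabriel_ext_full => //; apply: HC.
  by split=> //; apply: gabriel_ring_of_quot.
- have [/predeqP E_wE /predeqP ->] := E_limit w_limit.
  have GE : gabriel_filter (E w) by rewrite E_wE; apply: gabriel_bigcap => v /IH[].
  by split=> //; apply: gabriel_ring_of_quot.
Qed.

End FilterChain.

Theorem lemma4p1 (R Q : pzRingType) (phi : {rmorphism R -> Q})
  (W : Type) (lt : W -> W -> Prop)
  (E : W -> (R -> Prop) -> Prop) (Qa : W -> Q -> Prop) :
  is_Qmax phi ->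
  condC phi ->
  well_order lt ->
  (forall w, is_least lt w ->
     (forall I, E w I <-> dense_right_ideal I) /\ (forall q, Qa w q)) ->
  (forall w v, is_succ_of lt w v ->
     (forall I, E w I <-> right_ideal I /\ ideal_ext_full phi I (Qa v)) /\
     (forall q, Qa w q <-> ring_of_quot phi (E w) q)) ->
  (forall w, is_limit lt w ->
     (forall I, E w I <-> right_ideal I /\ (forall v, lt v w -> E v I)) /\
     (forall q, Qa w q <-> ring_of_quot phi (E w) q)) ->
  forall w v, is_succ_of lt w v ->
  forall I, E w I ->
  exists J, [/\ fg_right_ideal J, E w J & forall x, J x -> I x].
Proof.
move=> [phi_inj _ _] HC [lt_wf _ _] E_least E_succ E_limit w v wv I EwI.
have [_ Qa_v] := filter_chain_gabriel phi_inj HC lt_wf E_least E_succ E_limit v.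
have [E_w _] := E_succ w v wv.
have [rI I_full] := (E_w I).1 EwI.
have [J [fgJ J_full JI]] := fg_ext_full Qa_v rI I_full.
by exists J; split=> //; apply/E_w; split=> //; case: fgJ.
Qed.
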